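(* In the setting described in the context, for real constants $c_0,c_1,c_2$ consider the covariant derivative $D$ determined by $$D\Xi^a=c_0X^a\varrho\otimes\varrho+c_1(-1)^{\hat a}\,\Xi^a\otimes\varrho+c_2\,\varrho\otimes\Xi^a,\qquad a=1,2,3.$$ Its torsion $\Theta=d-\pi\circ D$ satisfies $\Theta(\Xi^a)=-(c_1+c_2)\,\varrho\wedge\Xi^a$; hence $D$ is torsionless if and only if $c_2=-c_1$, so the torsionless connections of this form are exactly the two-parameter family $$D\Xi^a=c_0X^a\varrho\otimes\varrho+c_1\big((-1)^{\hat a}\Xi^a\otimes\varrho-\varrho\otimes\Xi^a\big),$$ i.e. $D\xi_1=c_0\theta_1\varrho\otimes\varrho+c_1(\xi_1\otimes\varrho-\varrho\otimes\xi_1)$, $D\eta=c_0x\varrho\otimes\varrho-c_1(\eta\otimes\varrho+\varrho\otimes\eta)$, $D\xi_2=c_0\theta_2\varrho\otimes\varrho+c_1(\xi_2\otimes\varrho-\varrho\otimes\xi_2)$.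
   Context: Fix a real (commuting) parameter $h$. $\mathcal A$ is the $\mathbb Z_2$-graded algebra (quantum superspace covariant under the super-Jordanian quantum supergroup $OSp_h(2/1)$) generated by odd $\theta_1,\theta_2$ and even $x$ with relations $[\theta_1,x]=-hx\theta_2$, $\{\theta_1,\theta_2\}=0$, $[\theta_2,x]=0$, $\theta_1^2=-\frac h2(x^2-2\theta_1\theta_2)$, $\theta_2^2=0$. Write $(X^1,X^2,X^3)=(\theta_1,x,\theta_2)$, index parities $\hat1=\hat3=0$, $\hat2=1$, and $\Xi^a=dX^a$, i.e. $\xi_1=d\theta_1$, $\eta=dx$, $\xi_2=d\theta_2$; $\xi_1,\xi_2$ are even and $\eta$ odd (the parity of $\Xi^a$ is $\hat a$). The exterior derivative $d$ is nilpotent and satisfies $d(f\wedge g)=df\wedge g+(-1)^{\hat f}f\wedge dg$. The differential calculus has the relations: $\xi_1\wedge\eta-\eta\wedge\xi_1=h\eta\wedge\xi_2$, $\xi_1\wedge\xi_2-\xi_2\wedge\xi_1=h\xi_2\wedge\xi_2$, $\eta\wedge\xi_2=\xi_2\wedge\eta$, $\eta\wedge\eta=-\frac h2\xi_2\wedge\xi_2$; and $[\theta_1,\xi_1]=h(\theta_1\xi_2+x\eta-\theta_2\xi_1-\frac h2\theta_2\xi_2)$, $\{\theta_1,\eta\}=hx\xi_2$, $[\theta_1,\xi_2]=h\theta_2\xi_2$, $[x,\xi_1]=-h\theta_2\eta$, $[x,\eta]=-h\theta_2\xi_2$, $[x,\xi_2]=0$, $[\theta_2,\xi_1]=-h\theta_2\xi_2$,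 $\{\theta_2,\eta\}=0$, $[\theta_2,\xi_2]=0$. The invariant one-form is $\varrho=\theta_1\xi_2+x\eta-\theta_2\xi_1-\frac h2\theta_2\xi_2$. The map $\pi:\Omega^1\otimes_{\mathcal A}\Omega^1\to\Omega^2$ is $\pi(\alpha\otimes\beta)=\alpha\wedge\beta$. The map $\sigma$ on $\Omega^1\otimes_{\mathcal A}\Omega^1$ is the $\mathcal A$-bilinear map given by $\sigma(\xi_1\otimes\xi_1)=\xi_1\otimes\xi_1-h(\xi_1\otimes\xi_2+\eta\otimes\eta-\xi_2\otimes\xi_1-\frac h2\xi_2\otimes\xi_2)$, $\sigma(\xi_1\otimes\eta)=\eta\otimes\xi_1+h\xi_2\otimes\eta$, $\sigma(\xi_1\otimes\xi_2)=\xi_2\otimes\xi_1+h\xi_2\otimes\xi_2$, $\sigma(\eta\otimes\xi_1)=\xi_1\otimes\eta-h\eta\otimes\xi_2$, $\sigma(\eta\otimes\eta)=-\eta\otimes\eta-h\xi_2\otimes\xi_2$, $\sigma(\eta\otimes\xi_2)=\xi_2\otimes\eta$, $\sigma(\xi_2\otimes\xi_1)=\xi_1\otimes\xi_2-h\xi_2\otimes\xi_2$, $\sigma(\xi_2\otimes\eta)=\eta\otimes\xi_2$, $\sigma(\xi_2\otimes\xi_2)=\xi_2\otimes\xi_2$. A covariant derivative (linear connection) is a linear map $D:\Omega^1\to\Omega^1\otimes_{\mathcal A}\Omega^1$ with $D(f\xi)=df\otimes\xi+(-1)^{\hat f}fD\xi$ and $D(\xi f)=(-1)^{\hat\xi}\sigma(\xi\otimes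 df)+(D\xi)f$ for homogeneous $f\in\mathcal A$, $\xi\in\Omega^1$; it is determined by its values on $\Xi^a$. Its torsion is $\Theta=d-\pi\circ D$. *)

From HB Require Import structures.
From mathcomp Require Import all_boot all_order all_algebra.
From mathcomp Require Import reals.
Set Implicit Arguments. Unset Strict Implicit. Unset Printing Implicit Defensive.
Import Order.TTheory GRing.Theory Num.Theory.
Local Open Scope ring_scope.

(* Generators of the exterior algebra Omega = A + Omega^1 + Omega^2 + ... :
   theta1, x, theta2 (the algebra A) and xi1 = d theta1, eta = dx,
   xi2 = d theta2 (the one-forms). *)
Inductive gen := Th1 | Xg | Th2 | Xi1 | Eta | Xi2.

Inductive term (R : Type) :=
  | Gen of gen
  | Cst of R
  | Add of term R & term R
  | Mul of term R & term R.   (* algebra product = wedge product / module action *)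
Arguments Gen {R}.

Section Terms.
Variable R : realType.
Definition tzero : term R := Cst 0.
Definition tscale (r : R) (u : term R) : term R := Mul (Cst r) u.
Definition tsub (u v : term R) : term R := Add u (tscale (-1) v).

Definition th1 : term R := Gen Th1.
Definition xx  : term R := Gen Xg.
Definition th2 : term R := Gen Th2.
Definition xi1 : term R := Gen Xi1.
Definition eta : term R := Gen Eta.
Definition xi2 : term R := Gen Xi2.

Definition rho (h : R) : term R :=
  tsub (Add (Mul th1 xi2) (Add (Mul xx eta) (tscale (-1) (Mul th2 xi1))))
       (tscale (h / 2) (Mul th2 xi2)).

Definition relations (h : R) : seq (term R * term R) := [::
  (tsub (Mul th1 xx) (Mul xx th1), tscale (- h) (Mul xx th2));
  (Add (Mul th1 th2) (Mul th2 th1), tzero);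
  (tsub (Mul th2 xx) (Mul xx th2), tzero);
  (Mul th1 th1, tscale (- (h / 2)) (tsub (Mul xx xx) (tscale 2 (Mul th1 th2))));
  (Mul th2 th2, tzero);
  (tsub (Mul xi1 eta) (Mul eta xi1), tscale h (Mul eta xi2));
  (tsub (Mul xi1 xi2) (Mul xi2 xi1), tscale h (Mul xi2 xi2));
  (Mul eta xi2, Mul xi2 eta);
  (Mul eta eta, tscale (- (h / 2)) (Mul xi2 xi2));
  (tsub (Mul th1 xi1) (Mul xi1 th1), tscale h (rho h));
  (Add (Mul th1 eta) (Mul eta th1), tscale h (Mul xx xi2));
  (tsub (Mul th1 xi2) (Mul xi2 th1), tscale h (Mul th2 xi2));
  (tsub (Mul xx xi1) (Mul xi1 xx), tscale (- h) (Mul th2 eta));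
  (tsub (Mul xx eta) (Mul eta xx), tscale (- h) (Mul th2 xi2));
  (tsub (Mul xx xi2) (Mul xi2 xx), tzero);
  (tsub (Mul th2 xi1) (Mul xi1 th2), tscale (- h) (Mul th2 xi2));
  (Add (Mul th2 eta) (Mul eta th2), tzero);
  (tsub (Mul th2 xi2) (Mul xi2 th2), tzero)
].

Fixpoint inrel (p : term R * term R) (s : seq (term R * term R)) : Prop :=
  if s is q :: s' then p = q \/ inrel p s' else False.

(* [eqv h u v]: u = v in Omega, the free unital associative R-algebra on the
   generators modulo the two-sided ideal generated by [relations h]. *)
Inductive eqv (h : R) : term R -> term R -> Prop :=
  | eqv_refl u : eqv h u u
  | eqv_sym u v : eqv h u v -> eqv h v u
  | eqv_trans u v w : eqv h u v -> eqv h v w -> eqv h u w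
  | eqv_add u u' v v' : eqv h u u' -> eqv h v v' -> eqv h (Add u v) (Add u' v')
  | eqv_mul u u' v v' : eqv h u u' -> eqv h v v' -> eqv h (Mul u v) (Mul u' v')
  | eqv_addA u v w : eqv h (Add u (Add v w)) (Add (Add u v) w)
  | eqv_addC u v : eqv h (Add u v) (Add v u)
  | eqv_add0 u : eqv h (Add tzero u) u
  | eqv_addN u : eqv h (Add u (tscale (-1) u)) tzero
  | eqv_mulA u v w : eqv h (Mul u (Mul v w)) (Mul (Mul u v) w)
  | eqv_mul1l u : eqv h (Mul (Cst 1) u) u
  | eqv_mul1r u : eqv h (Mul u (Cst 1)) u
  | eqv_mulDl u v w : eqv h (Mul (Add u v) w) (Add (Mul u w) (Mul v w))
  | eqv_mulDr u v w : eqv h (Mul u (Add v w)) (Add (Mul u v) (Mul u w))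
  | eqv_cstD a b : eqv h (Add (Cst a) (Cst b)) (Cst (a + b))
  | eqv_cstM a b : eqv h (Mul (Cst a) (Cst b)) (Cst (a * b))
  | eqv_cstC a u : eqv h (Mul (Cst a) u) (Mul u (Cst a))
  | eqv_rel l r : inrel (l, r) (relations h) -> eqv h l r.

Inductive idx := I1 | I2 | I3.
Definition X (a : idx) : term R :=
  match a with I1 => th1 | I2 => xx | I3 => th2 end.
Definition Xi (a : idx) : term R :=
  match a with I1 => xi1 | I2 => eta | I3 => xi2 end.
Definition hat (a : idx) : bool := if a is I2 then true else false.
Definition sgn (a : idx) : R := if hat a then -1 else 1.

(* elements of Omega^1 (x)_A Omega^1 represented as formal sums of simple
   tensors alpha (x) beta;  pi (alpha (x) beta) = alpha /\ beta *)
Definition tensor := seq (term R * term R).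
Definition pi (t : tensor) : term R :=
  foldr (fun p acc => Add (Mul p.1 p.2) acc) tzero t.

Definition Dconn (h c0 c1 c2 : R) (a : idx) : tensor :=
  [:: (tscale c0 (Mul (X a) (rho h)), rho h);
      (tscale (c1 * sgn a) (Xi a), rho h);
      (tscale c2 (rho h), Xi a)].

(* d Xi^a = d (d X^a) = 0 by nilpotency of d *)
Definition dXi (a : idx) : term R := tzero.

Definition torsion (h c0 c1 c2 : R) (a : idx) : term R :=
  tsub (dXi a) (pi (Dconn h c0 c1 c2 a)).

(* D is torsionless: Theta vanishes (Theta is left A-linear up to sign,
   Theta(f xi) = (-1)^f f Theta(xi), so it suffices on the basis Xi^a) *)
Definition torsionless (h c0 c1 c2 : R) : Prop :=
  forall a, eqv h (torsion h c0 c1 c2 a) tzero.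
End Terms.
Arguments X {R}.
Arguments Xi {R}.
Arguments sgn {R}.
Arguments dXi {R}.

From Pilot Require Import Defs.
From HB Require Import structures.
From mathcomp Require Import all_boot all_order all_algebra.
From mathcomp Require Import reals ring.
From Stdlib Require Import Setoid Morphisms.
Set Implicit Arguments. Unset Strict Implicit. Unset Printing Implicit Defensive.
Import GRing.Theory Num.Theory.
Local Open Scope ring_scope.

(* The one-form rho is graded-central among the one-forms,
   Xi^a rho = (-1)^(hat a) rho Xi^a, and rho rho = 0.  Hence in
   pi (D Xi^a) the c0-term vanishes and the c1-term becomes c1 rho Xi^a, so
   Theta(Xi^a) = -(c1 + c2) rho Xi^a.  These identities are certified by
   rewriting monomials of the free algebra with the defining relations,
   oriented as an ordering of the generators.  Conversely rho xi2 <> 0: a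
   linear functional on cubic words that vanishes on the relation ideal
   takes the value 1 on it, so Theta(xi2) = 0 forces c1 + c2 = 0. *)

Section Omega.
Variable R : realType.
Variable h : R.
Notation T := (term R).
Notation Z := (tzero R).
Notation "u ~~ v" := (eqv h u v) (at level 70).

#[local] Instance eqv_Equivalence : Equivalence (@eqv R h).
Proof. split; [exact: eqv_refl | exact: eqv_sym | exact: eqv_trans]. Qed.
#[local] Instance Add_Proper : Proper (eqv h ==> eqv h ==> eqv h) (@Add R).
Proof. by move=> ? ? ? ? ? ?; apply: eqv_add. Qed.
#[local] Instance Mul_Proper : Proper (eqv h ==> eqv h ==> eqv h) (@Mul R).
Proof. by move=> ? ? ? ? ? ?; apply: eqv_mul. Qed.
#[local] Hint Resolve eqv_refl : core.
#[local] Instance tsub_Proper : Proper (eqv h ==> eqv h ==> eqv h) (@tsub R).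
Proof. by move=> ? ? uu' ? ? vv'; rewrite /tsub /tscale uu' vv'. Qed.

Lemma eqv_addr0 u : Add u Z ~~ u.
Proof. rewrite eqv_addC; exact: eqv_add0. Qed.

Lemma eqv_mul0l u : Mul (Cst 0) u ~~ Z.
Proof.
set z := Mul (Cst 0) u.
have z_double : z ~~ Add z z by rewrite -eqv_mulDl eqv_cstD addr0.
transitivity (Add z (Add z (tscale (-1) z))); first by rewrite eqv_addN eqv_addr0.
by rewrite eqv_addA -z_double eqv_addN.
Qed.

Lemma eqv_mul0r u : Mul u Z ~~ Z.
Proof. rewrite -eqv_cstC; exact: eqv_mul0l. Qed.

Lemma eqv_subr0_eq u v : tsub u v ~~ Z -> u ~~ v.
Proof.
move=> uv0; have vN : Add (tscale (-1) v) v ~~ Z by rewrite eqv_addC eqv_addN.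
transitivity (Add u (Add (tscale (-1) v) v)); first by rewrite vN eqv_addr0.
by rewrite eqv_addA; rewrite /tsub in uv0; rewrite uv0 eqv_add0.
Qed.

(** * Normal forms in the free algebra *)

Definition mono := (R * seq gen)%type.
Fixpoint wterm (w : seq gen) : T :=
  if w is g :: w' then Mul (Gen g) (wterm w') else Cst 1.
Definition mterm (m : mono) : T := Mul (Cst m.1) (wterm m.2).
Fixpoint interp (p : seq mono) : T :=
  if p is m :: p' then Add (mterm m) (interp p') else Z.

Definition mulp (p q : seq mono) : seq mono :=
  flatten (map (fun m => map (fun n => (m.1 * n.1, m.2 ++ n.2)) q) p).
Fixpoint norm (u : T) : seq mono :=
  match u with
  | Gen g => [:: (1, [:: g])]
  | Cst r => [:: (r, [::])]
  | Add u v => norm u ++ norm v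
  | Mul u v => mulp (norm u) (norm v)
  end.

Lemma interp_cat p q : interp (p ++ q) ~~ Add (interp p) (interp q).
Proof.
elim: p => [|m p IH] /=; first by rewrite eqv_add0.
by rewrite IH eqv_addA.
Qed.

Lemma wterm_cat v w : wterm (v ++ w) ~~ Mul (wterm v) (wterm w).
Proof.
elim: v => [|g v IH] /=; first by rewrite eqv_mul1l.
by rewrite IH eqv_mulA.
Qed.

Lemma mterm_mul m n : Mul (mterm m) (mterm n) ~~ mterm (m.1 * n.1, m.2 ++ n.2).
Proof.
rewrite /mterm /= wterm_cat -eqv_cstM -!eqv_mulA.
by rewrite (eqv_mulA h (wterm m.2)) -eqv_cstC !eqv_mulA.
Qed.

Lemma interp_mulp p q : interp (mulp p q) ~~ Mul (interp p) (interp q).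
Proof.
elim: p => [|m p IH] /=; first by rewrite eqv_mul0l.
rewrite interp_cat IH eqv_mulDl; apply: eqv_add => //.
elim: q {IH} => [|n q IHq] /=; first by rewrite eqv_mul0r.
by rewrite IHq eqv_mulDr mterm_mul.
Qed.

Lemma norm_sound u : u ~~ interp (norm u).
Proof.
elim: u => [g|r|u IHu v IHv|u IHu v IHv] /=.
- by rewrite eqv_addr0 /mterm /= eqv_mul1l eqv_mul1r.
- by rewrite eqv_addr0 /mterm /= eqv_mul1r.
- by rewrite interp_cat -IHu -IHv.
- by rewrite interp_mulp -IHu -IHv.
Qed.

Definition gen_eqb (a b : gen) : bool :=
  match a, b with
  | Th1, Th1 | Xg, Xg | Th2, Th2 | Xi1, Xi1 | Eta, Eta | Xi2, Xi2 => true
  | _, _ => false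
  end.
Fixpoint word_eqb (v w : seq gen) : bool :=
  match v, w with
  | [::], [::] => true
  | a :: v', b :: w' => gen_eqb a b && word_eqb v' w'
  | _, _ => false
  end.

Lemma word_eqbP v w : word_eqb v w -> v = w.
Proof.
elim: v w => [|a v IH] [|b w] //= /andP[ab /IH ->].
by case: a b ab => [] [].
Qed.

Fixpoint insert (m : mono) (p : seq mono) : seq mono :=
  match p with
  | [::] => [:: m]
  | n :: p' =>
      if word_eqb m.2 n.2 then (m.1 + n.1, n.2) :: p' else n :: insert m p'
  end.
Definition collect (p : seq mono) : seq mono := foldr insert [::] p.
Fixpoint allzero (p : seq mono) : Prop :=
  if p is m :: p' then m.1 = 0 /\ allzero p' else True.

Lemma interp_insert m p : interp (insert m p) ~~ Add (mterm m) (interp p).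
Proof.
elim: p => [|n p IH] /=; first by [].
case: ifP => [/word_eqbP mn | _] /=.
  by rewrite eqv_addA /mterm mn -eqv_mulDl eqv_cstD.
by rewrite IH !eqv_addA (eqv_addC h (mterm n)).
Qed.

Lemma interp_collect p : interp (collect p) ~~ interp p.
Proof. by elim: p => [|m p IH] //=; rewrite interp_insert IH. Qed.

Lemma allzero_interp p : allzero p -> interp p ~~ Z.
Proof.
elim: p => [|m p IH] //= [m0 /IH ->].
by rewrite eqv_addr0 /mterm m0 eqv_mul0l.
Qed.

Fixpoint combo (s : seq (T * T * T)) : T :=
  if s is e :: s' then Add (Mul e.1.1 (tsub e.1.2 e.2)) (combo s') else Z.
Fixpoint all_eqv (s : seq (T * T * T)) : Prop :=
  if s is e :: s' then e.1.2 ~~ e.2 /\ all_eqv s' else True.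

Lemma combo_eqv0 s : all_eqv s -> combo s ~~ Z.
Proof.
elim: s => [|e s IH] //= [lr /IH ->].
by rewrite eqv_addr0 /tsub lr eqv_addN eqv_mul0r.
Qed.

(* [u ~~ v] as soon as [u - v] is, in the free algebra, the sum of the
   [k (l - r)] over the triples [(k, l, r)] of [s]. *)
Lemma eqv_modulo s u v :
  all_eqv s -> allzero (collect (norm (tsub (tsub u v) (combo s)))) -> u ~~ v.
Proof.
move=> /combo_eqv0 s0 /allzero_interp; rewrite interp_collect -norm_sound.
by rewrite s0 => /eqv_subr0_eq /eqv_subr0_eq.
Qed.

(** * Rewriting with the defining relations *)

(* [rewrite_rule a b = Some (p, (i, k))]: the word [a b] rewrites to [p],
   which differs from it by [k] times relation number [i] (from 0).  The rules order
   the generators as x < theta1 < theta2 < xi1 < eta < xi2. *)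
Definition rewrite_rule (a b : gen) : option (seq mono * (nat * R)) :=
  match a, b with
  | Th1, Xg => Some ([:: (1, [:: Xg; Th1]); (-h, [:: Xg; Th2])], (0%N, 1))
  | Th2, Th1 => Some ([:: (-1, [:: Th1; Th2])], (1%N, 1))
  | Th2, Xg => Some ([:: (1, [:: Xg; Th2])], (2%N, 1))
  | Th1, Th1 => Some ([:: (-(h/2), [:: Xg; Xg]); (h, [:: Th1; Th2])], (3%N, 1))
  | Th2, Th2 => Some ([::], (4%N, 1))
  | Eta, Xi1 => Some ([:: (1, [:: Xi1; Eta]); (-h, [:: Eta; Xi2])], (5%N, -1))
  | Xi2, Xi1 => Some ([:: (1, [:: Xi1; Xi2]); (-h, [:: Xi2; Xi2])], (6%N, -1))
  | Xi2, Eta => Some ([:: (1, [:: Eta; Xi2])], (7%N, -1))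
  | Eta, Eta => Some ([:: (-(h/2), [:: Xi2; Xi2])], (8%N, 1))
  | Xi1, Th1 => Some ([:: (1, [:: Th1; Xi1]); (-h, [:: Th1; Xi2]);
                         (-h, [:: Xg; Eta]); (h, [:: Th2; Xi1]);
                         (h * h / 2, [:: Th2; Xi2])], (9%N, -1))
  | Eta, Th1 => Some ([:: (-1, [:: Th1; Eta]); (h, [:: Xg; Xi2])], (10%N, 1))
  | Xi2, Th1 => Some ([:: (1, [:: Th1; Xi2]); (-h, [:: Th2; Xi2])], (11%N, -1))
  | Xi1, Xg => Some ([:: (1, [:: Xg; Xi1]); (h, [:: Th2; Eta])], (12%N, -1))
  | Eta, Xg => Some ([:: (1, [:: Xg; Eta]); (h, [:: Th2; Xi2])], (13%N, -1))
  | Xi2, Xg => Some ([:: (1, [:: Xg; Xi2])], (14%N, -1))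
  | Xi1, Th2 => Some ([:: (1, [:: Th2; Xi1]); (h, [:: Th2; Xi2])], (15%N, -1))
  | Eta, Th2 => Some ([:: (-1, [:: Th2; Eta])], (16%N, 1))
  | Xi2, Th2 => Some ([:: (1, [:: Th2; Xi2])], (17%N, -1))
  | _, _ => None
  end.

Lemma inrel_nth (d : T * T) s i : (i < size s)%N -> inrel (nth d s i) s.
Proof.
elim: s i => [|e s IH] [|i] //= lt_i; [by left | right].
exact: IH.
Qed.

Ltac expand_terms :=
  cbv [allzero collect insert word_eqb gen_eqb norm mulp flatten map cat foldr
       tsub tscale tzero rho th1 xx th2 xi1 Defs.eta xi2 fst snd interp mterm wterm
       andb combo relations nth].

Ltac close_coefficients :=
  repeat match goal with
         | |- _ /\ _ => split
         | |- True => exact I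
         end; field; done.

Lemma rewrite_rule_sound a b p w :
  rewrite_rule a b = Some (p, w) -> wterm [:: a; b] ~~ interp p.
Proof.
move=> ab; set rel := nth (Z, Z) (relations h) w.1.
apply: (@eqv_modulo [:: (Cst w.2, rel.1, rel.2)]) => /=.
  split=> //; apply: eqv_rel; rewrite -surjective_pairing; apply: inrel_nth.
  by case: a b ab => [] [] // [_ <-].
rewrite {}/rel; case: a b ab => [] [] //= [<- <-]; expand_terms; close_coefficients.
Qed.

Fixpoint rewrite_word (w : seq gen) : option (seq mono) :=
  if w is a :: w' then
    if w' is b :: w'' then
      if rewrite_rule a b is Some (p, _) then Some (mulp p [:: (1, w'')])
      else if rewrite_word w' is Some q then Some (mulp [:: (1, [:: a])] q)
      else None
    else None
  else None.

Definition rewrite_mono (m : mono) : seq mono :=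
  if rewrite_word m.2 is Some q then mulp [:: (m.1, [::])] q else [:: m].

Fixpoint rewrite_iter (n : nat) (p : seq mono) : seq mono :=
  if n is n'.+1 then rewrite_iter n' (collect (flatten (map rewrite_mono p))) else p.

Lemma interp1 m : interp [:: m] ~~ mterm m.
Proof. exact: eqv_addr0. Qed.

Lemma rewrite_word_sound w q : rewrite_word w = Some q -> wterm w ~~ interp q.
Proof.
elim: w q => [|a w' IH] q //; case: w' IH => [|b w'] IH //.
rewrite /= -/(rewrite_word (b :: w')).
case ab: (rewrite_rule a b) => [[p ?]|].
  move=> [<-]; rewrite interp_mulp interp1 /mterm /= eqv_mul1l.
  by rewrite -(rewrite_rule_sound ab) /= eqv_mul1r eqv_mulA.
case bw: (rewrite_word (b :: w')) => [qb|] // [<-].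
by rewrite interp_mulp interp1 /mterm /= eqv_mul1l eqv_mul1r -(IH _ bw).
Qed.

Lemma rewrite_mono_sound m : interp (rewrite_mono m) ~~ mterm m.
Proof.
rewrite /rewrite_mono; case mq: (rewrite_word m.2) => [q|]; last exact: interp1.
by rewrite interp_mulp interp1 /mterm /= -(rewrite_word_sound mq) eqv_mul1r.
Qed.

Lemma rewrite_iter_sound n p : interp (rewrite_iter n p) ~~ interp p.
Proof.
elim: n p => [|n IH] p //=; rewrite IH interp_collect.
by elim: p => [|m p IHp] //=; rewrite interp_cat IHp rewrite_mono_sound.
Qed.

Lemma eqv_by_rewriting n u v :
  allzero (rewrite_iter n (norm (tsub u v))) -> u ~~ v.
Proof.
move=> /allzero_interp; rewrite rewrite_iter_sound -norm_sound.
exact: eqv_subr0_eq.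
Qed.

Ltac run_rewriting n :=
  apply: (@eqv_by_rewriting n);
  cbv [rewrite_iter rewrite_mono rewrite_word rewrite_rule Xi sgn hat];
  expand_terms; close_coefficients.

(** * The invariant one-form *)

Lemma Xi_mul_rho a : Mul (Xi a) (rho h) ~~ tscale (sgn a) (Mul (rho h) (Xi a)).
Proof. by case: a; run_rewriting 3%N. Qed.

Lemma rho_mul_rho : Mul (rho h) (rho h) ~~ Z.
Proof. run_rewriting 4%N. Qed.

Lemma torsion_Xi c0 c1 c2 a :
  torsion h c0 c1 c2 a ~~ tscale (- (c1 + c2)) (Mul (rho h) (Xi a)).
Proof.
apply: (@eqv_modulo
  [:: (tscale (- c0) (X a), Mul (rho h) (rho h), Z);
      (Cst (- (c1 * sgn a)), Mul (Xi a) (rho h),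
       tscale (sgn a) (Mul (rho h) (Xi a)))]).
  by split; [exact: rho_mul_rho | split; first exact: Xi_mul_rho].
by case: a; cbv [X Xi sgn hat torsion Dconn Defs.pi dXi]; expand_terms;
  close_coefficients.
Qed.

(** * Linear functionals vanishing on the relation ideal *)

Section Pairing.
Variable phi : seq gen -> R.

Definition pairing (a b : seq gen) (u : T) : R :=
  \sum_(m <- norm u) m.1 * phi (a ++ m.2 ++ b).

Lemma pairing_foldr a b u :
  pairing a b u = foldr (fun m s => m.1 * phi (a ++ m.2 ++ b) + s) 0 (norm u).
Proof.
rewrite /pairing; elim: (norm u) => [|m p IH]; first by rewrite big_nil.
by rewrite big_cons IH.
Qed.

Lemma pairing_Add a b u v : pairing a b (Add u v) = pairing a b u + pairing a b v.
Proof. by rewrite /pairing big_cat. Qed.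

Lemma pairing_Mull a b u v :
  pairing a b (Mul u v) = \sum_(m <- norm u) m.1 * pairing (a ++ m.2) b v.
Proof.
rewrite /pairing /= /mulp big_flatten big_map; apply: eq_bigr => m _.
rewrite big_map mulr_sumr; apply: eq_bigr => n _.
by rewrite mulrA -!catA.
Qed.

Lemma pairing_Mulr a b u v :
  pairing a b (Mul u v) = \sum_(n <- norm v) n.1 * pairing a (n.2 ++ b) u.
Proof.
rewrite pairing_Mull /pairing; under eq_bigr do rewrite mulr_sumr.
rewrite exchange_big /=; apply: eq_bigr => n _.
rewrite mulr_sumr; apply: eq_bigr => m _.
by rewrite mulrCA !catA.
Qed.

Lemma pairing_Cst a b r : pairing a b (Cst r) = r * phi (a ++ b).
Proof. by rewrite /pairing big_seq1. Qed.

Lemma pairing_Cstl a b r u : pairing a b (Mul (Cst r) u) = r * pairing a b u.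
Proof. by rewrite pairing_Mull big_seq1 cats0. Qed.

Lemma pairing_Cstr a b r u : pairing a b (Mul u (Cst r)) = r * pairing a b u.
Proof. by rewrite pairing_Mulr big_seq1. Qed.

Hypothesis phi_kills_relations : forall l r a b,
  inrel (l, r) (relations h) -> pairing a b l = pairing a b r.

Lemma pairing_eqv u v : u ~~ v -> forall a b, pairing a b u = pairing a b v.
Proof.
elim=> {u v}; first by [].
- by move=> u v _ IH a b; rewrite IH.
- by move=> u v w _ IHuv _ IHvw a b; rewrite IHuv IHvw.
- by move=> u u' v v' _ IHu _ IHv a b; rewrite !pairing_Add IHu IHv.
- move=> u u' v v' _ IHu _ IHv a b.
  rewrite pairing_Mulr; under eq_bigr do rewrite IHu.
  rewrite -pairing_Mulr pairing_Mull; under eq_bigr do rewrite IHv.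
  by rewrite -pairing_Mull.
- by move=> u v w a b; rewrite !pairing_Add addrA.
- by move=> u v a b; rewrite !pairing_Add addrC.
- by move=> u a b; rewrite pairing_Add pairing_Cst mul0r add0r.
- by move=> u a b; rewrite pairing_Add pairing_Cstl mulN1r addrN pairing_Cst mul0r.
- move=> u v w a b; rewrite pairing_Mull [RHS]pairing_Mull /= /mulp.
  rewrite big_flatten big_map; apply: eq_bigr => m _.
  rewrite pairing_Mull big_map mulr_sumr; apply: eq_bigr => n _.
  by rewrite mulrA catA.
- by move=> u a b; rewrite pairing_Cstl mul1r.
- by move=> u a b; rewrite pairing_Cstr mul1r.
- by move=> u v w a b; rewrite pairing_Add !pairing_Mull /= big_cat.
- by move=> u v w a b; rewrite pairing_Add !pairing_Mulr /= big_cat.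
- by move=> r1 r2 a b; rewrite pairing_Add !pairing_Cst mulrDl.
- by move=> r1 r2 a b; rewrite pairing_Cstl !pairing_Cst mulrA.
- by move=> r u a b; rewrite pairing_Cstl pairing_Cstr.
- by move=> l r lr a b; apply: phi_kills_relations.
Qed.

Definition quadratic (u : T) : Prop :=
  foldr (fun m P => (size m.2 = 2%N \/ m.1 = 0) /\ P) True (norm u).

Hypothesis phi_cubic : forall w, size w != 3%N -> phi w = 0.

Lemma pairing_quadratic a b u :
  quadratic u -> (size a + size b != 1)%N -> pairing a b u = 0.
Proof.
rewrite pairing_foldr /quadratic => + ab.
elim: (norm u) => [|m p IH] //= [[m2 | ->] /IH ->]; last by rewrite mul0r addr0.
by rewrite phi_cubic ?mulr0 ?addr0 // !size_cat m2 addnCA add2n !eqSS.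
Qed.

Lemma pairing_quadratic_eq l r : quadratic l -> quadratic r ->
  (forall g, pairing [:: g] [::] l = pairing [:: g] [::] r) ->
  (forall g, pairing [::] [:: g] l = pairing [::] [:: g] r) ->
  forall a b, pairing a b l = pairing a b r.
Proof.
move=> ql qr eql eqr a b.
have [ab1 | ab1] := eqVneq (size a + size b)%N 1%N; last by rewrite !pairing_quadratic.
case: a ab1 => [|g [|? ?]] //=.
- by case: b => [|g [|? ?]] //= _; apply: eqr.
- by case: b => //= _; apply: eql.
Qed.
End Pairing.

(* A solution of the linear system saying that a functional on cubic words
   vanishes on the relation ideal and takes the value 1 on [rho xi2]. *)
Definition rho_xi2_dual (w : seq gen) : R :=
  match w with
  | [:: a; b; c] =>
      match a, b, c with
      | Th1, Eta, Eta => - (h / 2)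
      | Th1, Xi2, Xi1 => - h
      | Th1, Xi2, Xi2 => 1
      | Xi1, Th1, Xi1 => h * h
      | Xi1, Th1, Xi2 => - h
      | Xi1, Xi1, Th1 => 2 * h * h
      | Xi1, Xi2, Th1 => - h
      | Eta, Th1, Eta => h / 2
      | Eta, Eta, Th1 => - (h / 2)
      | Xi2, Th1, Xi1 => - h
      | Xi2, Th1, Xi2 => 1
      | Xi2, Xi1, Th1 => - (2 * h)
      | Xi2, Xi2, Th1 => 1
      | _, _, _ => 0
      end
  | _ => 0
  end.

Ltac prove_quadratic :=
  cbv [quadratic]; expand_terms; cbv [size];
  repeat match goal with
         | |- _ /\ _ => split
         | |- True => exact I
         | |- _ \/ _ => first [left; reflexivity | right; reflexivity]
         end.

Ltac eval_pairing := rewrite !pairing_foldr; expand_terms; cbv [rho_xi2_dual].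

Lemma rho_xi2_dual_kills_relations l r a b :
  inrel (l, r) (relations h) ->
  pairing rho_xi2_dual a b l = pairing rho_xi2_dual a b r.
Proof.
have cubic w : size w != 3%N -> rho_xi2_dual w = 0.
  by case: w => [|? [|? [|? [|? ?]]]].
cbv [inrel relations].
do 18?[case=> [[-> ->] | ]]; last by [].
all: apply: (pairing_quadratic_eq cubic);
  [ prove_quadratic | prove_quadratic
  | by case; eval_pairing; field | by case; eval_pairing; field ].
Qed.

Lemma rho_xi2_free k : tscale k (Mul (rho h) (xi2 R)) ~~ Z -> k = 0.
Proof.
move=> /(pairing_eqv rho_xi2_dual_kills_relations) /(_ [::] [::]).
rewrite pairing_Cstl pairing_Cst mulr0.
have -> : pairing rho_xi2_dual [::] [::] (Mul (rho h) (xi2 R)) = 1.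
  by eval_pairing; field.
by rewrite mulr1.
Qed.

End Omega.

Theorem mainTheorem3 (R : realType) (h c0 c1 c2 : R) :
  (forall a : idx,
     eqv h (torsion h c0 c1 c2 a)
           (tscale (- (c1 + c2)) (Mul (rho h) (Xi a)))) /\
  (torsionless h c0 c1 c2 <-> c2 = - c1).
Proof.
split; first exact: torsion_Xi.
split=> [torsion0 | ->].
  have /eqP : - (c1 + c2) = 0.
    apply: (@rho_xi2_free _ h); apply: eqv_trans (torsion0 I3).
    exact: eqv_sym (torsion_Xi _ _ _ _ I3).
  by rewrite oppr_eq0 addrC addr_eq0 => /eqP.
move=> a; apply: eqv_trans (torsion_Xi _ _ _ _ a) _.
by rewrite addrN oppr0; apply: eqv_mul0l.
Qed.
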